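(* In the setting described in the context, for every $S\in\Omega_{worm}$, $$\pi_{worm}(S)\ \ge\ \frac12\left(\frac{x_{\min}}{2}\right)^{|E_C|},$$ where $x_{\min}=\min_{e\in E_C}x_e$.
   Context: Let $\beta>1$. Let $G=(V,E)$ be a finite connected simple 4-regular graph with, at each vertex, its four incident edges labelled bijectively $x_1,\dots,x_4$. Each edge has two half-edges (one at each endpoint). Pairing at each vertex slot $x_1$ with $x_4$ and $x_2$ with $x_3$, and following edges by entering a vertex through one slot of a pair and leaving through the other, partitions $E$ into closed trails (circuits) $C_1,\dots,C_m$. For each circuit a reference half-edge $h_i$ is fixed. Consider orientations (equivalently, maps $\sigma$ from half-edges to $\{0,1\}$ with opposite values on the two half-edges of each edge) of nonzero weight for the vertex function $f^*$ with $f^*(0011)=f^*(1100)=\beta$, $f^*(0101)=f^*(1010)=1$, $f^*=0$ otherwise (evaluated at $v$ on the half-edges at $v$ in slot order $x_1,\dots,x_4$); in these, values alternate along each circuit and $\sigma(C_i):=\sigma(h_i)$. A vertex at which the pair $\{x_1,x_4\}$ lies on $C_i$ and $\{x_2,x_3\}$ on $C_j$, $i\neq j$, is an agree-vertex if its weight is $\beta$ exactly when $\sigma(C_i)=\sigma(C_j)$ (and $1$ otherwise), and a disagree-vertex if its weight is $\beta$ exactly when $\sigma(C_i)\neq\sigma(C_j)$; $A(i,j),D(i,j)$ count these. $G_C=(\mathcal{C},E_C)$, $\mathcal{C}=\{C_1,\dots,C_m\}$, has an edge $\{C_i,C_j\}$ iff $i\ne j$ and they share such a vertex. Assume the system $X_u\oplus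 X_v=\mathbf{I}(A(u,v)<D(u,v))$ for all $\{u,v\}\in E_C$ has a solution over $\mathrm{GF}(2)$, and for each circuit with $X_i=1$ replace $h_i$ by an adjacent half-edge of $C_i$ (which complements $\sigma(C_i)$ and swaps agree/disagree vertices between $C_i$ and each other circuit); with $A,D$ recomputed after this change, set $\beta_e=\beta^{A(u,v)-D(u,v)}$ and $x_e=(\beta_e-1)/(\beta_e+1)$ for $e=\{u,v\}\in E_C$. Worm measure. For $k\ge0$ let $\Omega_k$ be the set of edge sets $S\subseteq E_C$ such that exactly $k$ vertices of $G_C$ have odd degree in $(\mathcal{C},S)$; $\Omega_{worm}=\Omega_0\cup\Omega_2$. Let $w(S)=\prod_{e\in S}x_e$, $Z_k=\sum_{S\in\Omega_k}w(S)$, $\xi(S)=m$ if $S\in\Omega_0$, $\xi(S)=2$ if $S\in\Omega_2$, $\xi(S)=0$ otherwise, $w_{worm}(S)=\xi(S)w(S)$, $Z_{worm}=mZ_0+2Z_2$ and $\pi_{worm}(S)=w_{worm}(S)/Z_{worm}$. *)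

From mathcomp Require Import all_boot all_order all_algebra.
Set Implicit Arguments. Unset Strict Implicit. Unset Printing Implicit Defensive.
Import Order.TTheory GRing.Theory Num.Theory.
Local Open Scope ring_scope.

(* The 4-regular labelled graph G is given by  nb : V -> 'I_4 -> V :
   nb v i is the other endpoint of the edge in slot x_(i+1) at v.
   Half-edges are pairs (v, i) : V * 'I_4 (the half-edge at v in slot i). *)

Section Worm.
Variables (R : realFieldType) (V : finType) (nb : V -> 'I_4 -> V) (beta : R).

Definition slot0 : 'I_4 := inord 0.
Definition slot1 : 'I_4 := inord 1.
Definition slot2 : 'I_4 := inord 2.
Definition slot3 : 'I_4 := inord 3.

Definition opp_slot (h : V * 'I_4) : 'I_4 :=
  odflt ord0 [pick j | nb (nb h.1 h.2) j == h.1].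
Definition opp_he (h : V * 'I_4) : V * 'I_4 := (nb h.1 h.2, opp_slot h).
(* pairing x1<->x4, x2<->x3 at a vertex *)
Definition pair_he (h : V * 'I_4) : V * 'I_4 := (h.1, rev_ord h.2).

Definition link : rel (V * 'I_4) :=
  fun h h' => (h' == opp_he h) || (h' == pair_he h).

Definition circ (h : V * 'I_4) : {set V * 'I_4} := [set h' | connect link h h'].
Definition circuits : {set {set V * 'I_4}} := [set circ h | h : V * 'I_4].

Definition crossing (v : V) : bool := circ (v, slot0) != circ (v, slot1).
Definition cpair (v : V) : {set {set V * 'I_4}} :=
  [set circ (v, slot0); circ (v, slot1)].
(* edges of G_C, as 2-element sets of circuits *)
Definition EC : {set {set {set V * 'I_4}}} := [set cpair v | v : V & crossing v].

(* vertex function f^*, arguments in slot order x1..x4 *)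
Definition fstar (a b c d : bool) : R :=
  if [&& ~~ a, ~~ b, c & d] || [&& a, b, ~~ c & ~~ d] then beta
  else if [&& ~~ a, b, ~~ c & d] || [&& a, ~~ b, c & ~~ d] then 1 else 0.

Definition orientation (s : {ffun V * 'I_4 -> bool}) : bool :=
  [forall h, s (opp_he h) == ~~ s h].
Definition vweight (s : {ffun V * 'I_4 -> bool}) (v : V) : R :=
  fstar (s (v, slot0)) (s (v, slot1)) (s (v, slot2)) (s (v, slot3)).
Definition nonzero_orientation (s : {ffun V * 'I_4 -> bool}) : bool :=
  orientation s && (\prod_(v : V) vweight s v != 0).

Variable ref : {set V * 'I_4} -> V * 'I_4.

Definition agree (v : V) : bool :=
  [forall s, nonzero_orientation s ==>
     ((vweight s v == beta) ==
      (s (ref (circ (v, slot0))) == s (ref (circ (v, slot1)))))].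
Definition disagree (v : V) : bool :=
  [forall s, nonzero_orientation s ==>
     ((vweight s v == beta) ==
      (s (ref (circ (v, slot0))) != s (ref (circ (v, slot1)))))].

Definition Acount (e : {set {set V * 'I_4}}) : nat :=
  #|[set v | [&& crossing v, cpair v == e & agree v]]|.
Definition Dcount (e : {set {set V * 'I_4}}) : nat :=
  #|[set v | [&& crossing v, cpair v == e & disagree v]]|.

Definition beta_e (e : {set {set V * 'I_4}}) : R :=
  beta ^ ((Acount e)%:Z - (Dcount e)%:Z).
Definition x_e (e : {set {set V * 'I_4}}) : R :=
  (beta_e e - 1) / (beta_e e + 1).

Definition degC (S : {set {set {set V * 'I_4}}}) (C : {set V * 'I_4}) : nat :=
  #|[set e in S | C \in e]|.
Definition n_odd (S : {set {set {set V * 'I_4}}}) : nat :=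
  #|[set C in circuits | odd (degC S C)]|.
Definition Omega (k : nat) : {set {set {set {set V * 'I_4}}}} :=
  [set S : {set {set {set V * 'I_4}}} | (S \subset EC) && (n_odd S == k)].
Definition Omega_worm := Omega 0 :|: Omega 2.

Definition m_circ : nat := #|circuits|.
Definition wS (S : {set {set {set V * 'I_4}}}) : R := \prod_(e in S) x_e e.
Definition Zk (k : nat) : R := \sum_(S in Omega k) wS S.
Definition xi (S : {set {set {set V * 'I_4}}}) : R :=
  if S \in Omega 0 then m_circ%:R else if S \in Omega 2 then 2 else 0.
Definition w_worm S : R := xi S * wS S.
Definition Z_worm : R := m_circ%:R * Zk 0 + 2 * Zk 2.
Definition pi_worm S : R := w_worm S / Z_worm.

(* min over E_C; every x_e < 1, so the neutral 1 only matters when E_C = set0,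
   where it is irrelevant since the exponent |E_C| is then 0 *)
Definition x_min : R := \big[Num.min/1]_(e in EC) x_e e.

End Worm.

From mathcomp Require Import all_boot all_order all_algebra.
From mathcomp Require Import zify lra.
Import Order.TTheory GRing.Theory Num.Theory.
Set Implicit Arguments. Unset Strict Implicit. Unset Printing Implicit Defensive.

(* After re-referencing, every edge of G_C has at least as many agree- as
   disagree-vertices, so beta_e >= 1 and 0 <= x_e <= 1; hence
   w(S) >= x_min^|E_C| on subsets of E_C, and Z_k <= |Omega_k|.
   Since G is connected so is G_C, so every circuit D other than a fixed u0 is
   joined to u0 by an edge set P_D whose odd vertices are exactly {u0, D}.
   Sending (S, D) to the symmetric difference of S and P_D injects
   Omega_0 x (C \ {u0}) into Omega_2, whence (m - 1)|Omega_0| <= |Omega_2|.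
   With |Omega_0| + |Omega_2| <= 2^|E_C| this gives
   Z_worm <= min(m, 2) 2^(|E_C|+1) <= xi(S) 2^(|E_C|+1), while Z_0 >= 1
   (from S = {}) keeps Z_worm positive. *)

Section SymmetricDifference.
Variable T : finType.
Implicit Types A B C : {set T}.

Definition symdiff A B : {set T} := [set x | (x \in A) (+) (x \in B)].

Lemma in_symdiff A B x : (x \in symdiff A B) = (x \in A) (+) (x \in B).
Proof. by rewrite inE. Qed.

Lemma symdiffK A B : symdiff (symdiff A B) B = A.
Proof. by apply/setP => x; rewrite !in_symdiff addbK. Qed.

Lemma symdiff0s A : symdiff set0 A = A.
Proof. by apply/setP => x; rewrite in_symdiff inE. Qed.

Lemma symdiffss A : symdiff A A = set0.
Proof. by apply/setP => x; rewrite in_symdiff addbb inE. Qed.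

Lemma symdiff_subset A B C : A \subset C -> B \subset C -> symdiff A B \subset C.
Proof.
move=> /subsetP sAC /subsetP sBC; apply/subsetP => x; rewrite in_symdiff.
by case/boolP: (x \in A) => [/sAC | _ /sBC].
Qed.

Lemma symdiff1 x y : x != y -> symdiff [set x] [set y] = [set x; y].
Proof.
move=> neq_xy; apply/setP => z; rewrite in_symdiff !inE.
by case: (z =P x) => [-> | _]; rewrite ?(negbTE neq_xy).
Qed.

Lemma odd_card_symdiff A B : odd #|symdiff A B| = odd #|A| (+) odd #|B|.
Proof.
have card_UI : #|symdiff A B| + #|A :&: B| = #|A :|: B|.
  rewrite -(cardsID (A :&: B) (A :|: B)) addnC.
  by congr (_ + _); apply: eq_card => x; rewrite !inE; case: (x \in A); case: (x \in B).
move: (cardsUI A B); rewrite -card_UI -addnA => /(congr1 odd).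
by rewrite !oddD addbb addbF.
Qed.

End SymmetricDifference.

Section EdgeSubsets.
Variables (T : finType) (Vs : {set T}) (E : {set {set T}}).
Implicit Types (S P : {set {set T}}) (e : {set T}).

Definition odd_vertices S : {set T} := [set x in Vs | odd #|[set e in S | x \in e]|].

(* For Vs := circuits nb and E := EC nb this unfolds to Omega nb k. *)
Definition edge_subsets_odd (k : nat) : {set {set {set T}}} :=
  [set S : {set {set T}} | (S \subset E) && (#|odd_vertices S| == k)].

Definition adjacent : rel T := fun x y => [set x; y] \in E.

Lemma adjacent_sym : symmetric adjacent.
Proof. by move=> x y; rewrite /adjacent setUC. Qed.

Lemma odd_vertices_sub S : odd_vertices S \subset Vs.
Proof. by apply/subsetP => x; rewrite inE => /andP[]. Qed.

Lemma odd_vertices0 : odd_vertices set0 = set0.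
Proof.
apply/setP => x; rewrite !inE.
have -> : [set e in (set0 : {set {set T}}) | x \in e] = set0.
  by apply/setP => e; rewrite !inE.
by rewrite cards0 andbF.
Qed.

Lemma odd_vertices1 e : e \subset Vs -> odd_vertices [set e] = e.
Proof.
move=> /subsetP sub_e; apply/setP => x; rewrite !inE.
have -> : [set f in [set e] | x \in f] = if x \in e then [set e] else set0.
  apply/setP => f; rewrite !inE; case: (f =P e) => [-> | /eqP/negbTE ne];
  by case: (x \in e); rewrite ?inE ?eqxx ?ne.
by case: ifP => [/sub_e -> | _]; rewrite ?cards1 ?cards0 ?andbF.
Qed.

Lemma odd_vertices_symdiff S P :
  odd_vertices (symdiff S P) = symdiff (odd_vertices S) (odd_vertices P).
Proof.
apply/setP => x; rewrite in_symdiff !inE.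
have -> : [set e in symdiff S P | x \in e] =
          symdiff [set e in S | x \in e] [set e in P | x \in e].
  by apply/setP => e; rewrite !(in_symdiff, inE); case: (x \in e); rewrite ?andbT ?andbF.
by rewrite odd_card_symdiff; case: (x \in Vs).
Qed.

Lemma card_edge_subsets_odd02_le :
  (#|edge_subsets_odd 0| + #|edge_subsets_odd 2| <= 2 ^ #|E|)%N.
Proof.
rewrite -cardsUI -card_powerset.
have -> : edge_subsets_odd 0 :&: edge_subsets_odd 2 = set0.
  by apply/setP => S; rewrite !inE; case: (S \subset E); case: #|_| => [|[|[]]].
rewrite cards0 addn0; apply: subset_leq_card; apply/subsetP => S.
by rewrite powersetE !inE => /orP[] /andP[].
Qed.

Lemma edge_subsets_odd2_eq0 : (#|Vs| < 2)%N -> edge_subsets_odd 2 = set0.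
Proof.
move=> Vs_lt2; apply/setP => S; rewrite !inE; apply/negP => /andP[_ /eqP card2].
by move: (subset_leq_card (odd_vertices_sub S)); rewrite card2 leqNgt Vs_lt2.
Qed.

Hypothesis edgeP : forall e, e \in E -> e \subset Vs /\ #|e| = 2.

Lemma adjacent_neq x y : adjacent x y -> x != y.
Proof. by case/edgeP => _; rewrite cards2; case: (x != y). Qed.

Lemma join_exists x y : connect adjacent x y ->
  exists2 P : {set {set T}}, P \subset E & odd_vertices P = symdiff [set x] [set y].
Proof.
case/connectP => p + ->; elim: p x => [|z p IHp] x /=.
  by exists set0; rewrite ?sub0set ?odd_vertices0 ?symdiffss.
case/andP => xz /IHp[P sPE oddP].
exists (symdiff P [set [set x; z]]); first by apply: symdiff_subset; rewrite ?sub1set.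
rewrite odd_vertices_symdiff oddP odd_vertices1; last by case: (edgeP xz).
have neq_xz := adjacent_neq xz.
apply/setP => w; rewrite !(in_symdiff, inE).
case: (w =P x) => [-> | _] /=; first by rewrite (negbTE neq_xz) addbC.
by rewrite addbAC addbb.
Qed.

Variable u0 : T.
Hypothesis u0_in : u0 \in Vs.
Hypothesis connected : forall y, y \in Vs -> connect adjacent u0 y.

Let join y : {set {set T}} := odflt set0 [pick P : {set {set T}} |
  (P \subset E) && (odd_vertices P == symdiff [set u0] [set y])].

Lemma joinP y : y \in Vs ->
  join y \subset E /\ odd_vertices (join y) = symdiff [set u0] [set y].
Proof.
rewrite /join; case: pickP => [P /andP[sPE /eqP ->] // | none /connected].
by case/join_exists => P sPE oddP; move: (none P); rewrite sPE oddP eqxx.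
Qed.

Lemma card_edge_subsets_odd2_ge :
  ((#|Vs| - 1) * #|edge_subsets_odd 0| <= #|edge_subsets_odd 2|)%N.
Proof.
pose dom := setX (edge_subsets_odd 0) (Vs :\ u0).
have -> : ((#|Vs| - 1) * #|edge_subsets_odd 0| = #|dom|)%N.
  by rewrite cardsX mulnC (cardsD1 u0 Vs) u0_in add1n subn1.
pose F (p : {set {set T}} * T) := symdiff p.1 (join p.2).
have oddF S y : S \in edge_subsets_odd 0 -> y \in Vs :\ u0 ->
    odd_vertices (F (S, y)) = [set u0; y].
  rewrite !inE => /andP[_ /eqP/cards0_eq oddS] /andP[neq_yu0 y_in].
  rewrite odd_vertices_symdiff oddS symdiff0s (joinP y_in).2 symdiff1 //.
  by rewrite eq_sym.
have injF : {in dom &, injective F}.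
  move=> [S y] [S' y'] /setXP[S0 y_in] /setXP[S'0 y'_in] eqF.
  have := congr1 odd_vertices eqF; rewrite !oddF // => /setP/(_ y).
  move: y_in; rewrite !inE eqxx => /andP[/negbTE -> _] /esym /eqP eq_yy'.
  move: eqF; rewrite /F /= -eq_yy' => eqF.
  by rewrite -(symdiffK S (join y)) eqF symdiffK.
rewrite -(card_in_imset injF); apply: subset_leq_card.
apply/subsetP => _ /imsetP[[S y] /setXP[S0 y_in] ->].
rewrite inE oddF // cards2; move: y_in; rewrite !inE (eq_sym u0).
case/andP=> -> y_Vs; rewrite andbT.
apply: symdiff_subset; last exact: (joinP y_Vs).1.
by move: S0; rewrite inE => /andP[].
Qed.

Lemma card_edge_subsets_odd_le :
  (#|Vs| * #|edge_subsets_odd 0| + 2 * #|edge_subsets_odd 2|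
     <= minn #|Vs| 2 * 2 ^ #|E|.+1)%N.
Proof.
have total := card_edge_subsets_odd02_le; rewrite expnS.
have [Vs_lt2 | Vs_ge2] := ltnP #|Vs| 2.
  rewrite edge_subsets_odd2_eq0 // cards0; nia.
have := card_edge_subsets_odd2_ge.
have -> : (#|Vs| * #|edge_subsets_odd 0| =
           #|edge_subsets_odd 0| + (#|Vs| - 1) * #|edge_subsets_odd 0|)%N.
  by rewrite mulnBl mul1n addnC subnK // leq_pmull // ltnW.
lia.
Qed.

End EdgeSubsets.

Section Circuits.
Variables (V : finType) (nb : V -> 'I_4 -> V).
Hypothesis nb_inj : forall v, injective (nb v).
Hypothesis nb_sym : forall v i, exists j, nb (nb v i) j = v.

Lemma opp_slotP h : nb (nb h.1 h.2) (opp_slot nb h) = h.1.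
Proof.
rewrite /opp_slot; case: pickP => [j /eqP // | none].
by have [j back] := nb_sym h.1 h.2; move: (none j); rewrite back eqxx.
Qed.

Lemma opp_heK : involutive (opp_he nb).
Proof.
move=> [v i]; rewrite /opp_he /=.
have back := opp_slotP (v, i); have back2 := opp_slotP (opp_he nb (v, i)).
by rewrite /= back in back2 *; rewrite (nb_inj back2).
Qed.

Lemma pair_heK : involutive (@pair_he V).
Proof. by move=> [v i]; rewrite /pair_he /= rev_ordK. Qed.

Lemma link_sym : symmetric (link nb).
Proof.
move=> h h'; rewrite /link; congr orb; apply/eqP/eqP => ->;
  by rewrite ?opp_heK ?pair_heK.
Qed.

Lemma circ_link h h' : link nb h h' -> circ nb h = circ nb h'.
Proof.
move=> hh'; have conn_hh' : connect (link nb) h h' := connect1 hh'.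
have conn_h'h : connect (link nb) h' h by rewrite (sym_connect_sym link_sym).
apply/setP => x; rewrite !inE; apply/idP/idP.
  exact: connect_trans conn_h'h.
exact: connect_trans conn_hh'.
Qed.

Lemma circ_opp h : circ nb h = circ nb (opp_he nb h).
Proof. by apply: circ_link; rewrite /link eqxx. Qed.

Lemma circ_pair h : circ nb h = circ nb (pair_he h).
Proof. by apply: circ_link; rewrite /link eqxx orbT. Qed.

Lemma circ_in h : circ nb h \in circuits nb.
Proof. exact: imset_f. Qed.

Lemma slot_cases (i : 'I_4) :
  [\/ i = slot0 /\ rev_ord i = slot3, i = slot3 /\ rev_ord i = slot0,
      i = slot1 /\ rev_ord i = slot2 | i = slot2 /\ rev_ord i = slot1].
Proof.
case: i => [[|[|[|[|k]]]] lt_i4] //;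
  [constructor 1 | constructor 3 | constructor 4 | constructor 2];
  by split; apply: val_inj; rewrite /= ?inordK.
Qed.

Lemma circ_cases v i :
  circ nb (v, i) = circ nb (v, slot0) \/ circ nb (v, i) = circ nb (v, slot1).
Proof.
by case: (slot_cases i) => -[-> rev_i]; [left | left | right | right];
  rewrite // circ_pair /pair_he /= rev_i.
Qed.

Lemma EC_edgeP e : e \in EC nb -> e \subset circuits nb /\ #|e| = 2.
Proof.
case/imsetP => v; rewrite inE /crossing => cross_v ->.
split; last by rewrite cards2 cross_v.
by apply/subsetP => C; rewrite !inE => /orP[] /eqP ->; apply: circ_in.
Qed.

Lemma connect_circ_slots v i j :
  connect (adjacent (EC nb)) (circ nb (v, i)) (circ nb (v, j)).
Proof.
have conn01 : connect (adjacent (EC nb)) (circ nb (v, slot0)) (circ nb (v, slot1)).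
  have [-> // | cross_v] := eqVneq (circ nb (v, slot0)) (circ nb (v, slot1)).
  by apply: connect1; apply/imsetP; exists v; rewrite ?inE.
have conn0 k : connect (adjacent (EC nb)) (circ nb (v, slot0)) (circ nb (v, k)).
  by case: (circ_cases v k) => ->.
apply: connect_trans (conn0 j).
by rewrite (sym_connect_sym (adjacent_sym (EC nb))).
Qed.

Hypothesis nb_connected : forall u v, connect (fun a b => [exists i, nb a i == b]) u v.

Lemma circuits_connected v0 C : C \in circuits nb ->
  connect (adjacent (EC nb)) (circ nb (v0, slot0)) C.
Proof.
case/imsetP => -[v j] _ ->; have /connectP[p + ->] := nb_connected v0 v.
elim: p v0 => [|w p IHp] u /=; first by move=> _; apply: connect_circ_slots.
case/andP => /existsP[i /eqP uw] /IHp; apply: connect_trans.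
apply: connect_trans (connect_circ_slots u slot0 i) _.
by rewrite circ_opp /opp_he /= uw; apply: connect_circ_slots.
Qed.

End Circuits.

Local Open Scope ring_scope.

Lemma eqb_addb2 (a b x y : bool) : (a (+) x == b (+) y) = (a == b) (+) (x (+) y).
Proof. by case: a; case: b; case: x; case: y. Qed.

Section Reference.
Variables (R : realFieldType) (V : finType) (nb : V -> 'I_4 -> V) (beta : R).
Variables (ref ref' : {set V * 'I_4} -> V * 'I_4) (X : {set V * 'I_4} -> bool).
Hypothesis Href' : forall C, C \in circuits nb ->
  if X C then link nb (ref C) (ref' C) else ref' C == ref C.

Lemma nonzero_orientation_pair s v : nonzero_orientation nb beta s ->
  s (v, slot3) = ~~ s (v, slot0) /\ s (v, slot2) = ~~ s (v, slot1).
Proof.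
case/andP => _ prod_neq0.
have : vweight beta s v != 0.
  by apply: contra prod_neq0 => /eqP wv0; rewrite (bigD1 v) //= wv0 mul0r.
rewrite /vweight /fstar.
by case: (s (v, slot0)); case: (s (v, slot1)); case: (s (v, slot2));
  case: (s (v, slot3)); rewrite ?eqxx.
Qed.

Lemma nonzero_orientation_link s h h' : nonzero_orientation nb beta s ->
  link nb h h' -> s h' = ~~ s h.
Proof.
move=> nz_s; have /andP[/forallP orient _] := nz_s.
case/orP => /eqP ->; first exact/eqP/orient.
case: h => v i; rewrite /pair_he /=; have [s3 s2] := nonzero_orientation_pair v nz_s.
by case: (slot_cases i) => -[-> ->]; rewrite ?s3 ?s2 ?negbK.
Qed.

Lemma sign_ref' s C : nonzero_orientation nb beta s -> C \in circuits nb ->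
  s (ref' C) = s (ref C) (+) X C.
Proof.
move=> nz_s /Href'; case: (X C) => [/(nonzero_orientation_link nz_s) -> | /eqP ->].
  by rewrite addbT.
by rewrite addbF.
Qed.

Definition flipped v := X (circ nb (v, slot0)) (+) X (circ nb (v, slot1)).

Lemma agree_ref' v : agree nb beta ref' v =
  if flipped v then disagree nb beta ref v else agree nb beta ref v.
Proof.
rewrite /flipped; case: ifP => flip; apply: eq_forallb => s;
  case: (boolP (nonzero_orientation nb beta s)) => //= nz_s;
  by rewrite !(sign_ref' nz_s) ?circ_in // eqb_addb2 flip ?addbT ?addbF.
Qed.

Lemma disagree_ref' v : disagree nb beta ref' v =
  if flipped v then agree nb beta ref v else disagree nb beta ref v.
Proof.
rewrite /flipped; case: ifP => flip; apply: eq_forallb => s;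
  case: (boolP (nonzero_orientation nb beta s)) => //= nz_s;
  by rewrite !(sign_ref' nz_s) ?circ_in // eqb_addb2 flip ?addbT ?addbF ?negbK.
Qed.

Hypothesis HX : forall v, crossing nb v ->
  flipped v = (Acount nb beta ref (cpair nb v) < Dcount nb beta ref (cpair nb v))%N.

Lemma Acount_ref' e :
  Acount nb beta ref' e = maxn (Acount nb beta ref e) (Dcount nb beta ref e).
Proof.
rewrite /maxn; case: ifP => lt_AD; apply: eq_card => v; rewrite !inE;
  case cross_v: (crossing nb v); case: eqP => //= cpair_v;
  by rewrite agree_ref' (HX cross_v) cpair_v lt_AD.
Qed.

Lemma Dcount_ref' e :
  Dcount nb beta ref' e = minn (Acount nb beta ref e) (Dcount nb beta ref e).
Proof.
rewrite /minn; case: ifP => lt_AD; apply: eq_card => v; rewrite !inE;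
  case cross_v: (crossing nb v); case: eqP => //= cpair_v;
  by rewrite disagree_ref' (HX cross_v) cpair_v lt_AD.
Qed.

Lemma subr1_divDr1_bounds (b : R) : 1 <= b -> 0 <= (b - 1) / (b + 1) <= 1.
Proof.
move=> b_ge1; have b1_gt0 : 0 < b + 1 by lra.
apply/andP; split; first by apply: divr_ge0; lra.
by rewrite ler_pdivrMr // mul1r; lra.
Qed.

Lemma x_e_bounds e : 1 < beta -> 0 <= x_e nb beta ref' e <= 1.
Proof.
move=> beta_gt1; apply: subr1_divDr1_bounds.
rewrite /beta_e subzn; last by rewrite Acount_ref' Dcount_ref' geq_min leq_maxl.
by apply: exprn_ege1; apply: ltW.
Qed.

End Reference.

Section WormWeights.
Variables (R : realFieldType) (V : finType) (nb : V -> 'I_4 -> V) (beta : R).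
Variable ref : {set V * 'I_4} -> V * 'I_4.
Implicit Types S : {set {set {set V * 'I_4}}}.
Hypothesis x_e01 : forall e, 0 <= x_e nb beta ref e <= 1.

Local Notation x_min := (x_min nb beta ref).
Local Notation wS := (wS nb beta ref).
Local Notation Zk := (Zk nb beta ref).

Lemma x_min_ge0 : 0 <= x_min.
Proof. by apply: le_bigmin => // e _; case/andP: (x_e01 e). Qed.

Lemma x_min_le1 : x_min <= 1.
Proof. exact: bigmin_le_id. Qed.

Lemma wS_ge0 S : 0 <= wS S.
Proof. by apply: prodr_ge0 => e _; case/andP: (x_e01 e). Qed.

Lemma wS_le1 S : wS S <= 1.
Proof. by apply: prodr_ile1 => e _; apply: x_e01. Qed.

Lemma x_min_expn_le_wS S : S \subset EC nb -> x_min ^+ #|EC nb| <= wS S.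
Proof.
move=> /subsetP sSE; apply: (@le_trans _ _ (x_min ^+ #|S|)).
  by apply: ler_wiXn2l; rewrite ?x_min_ge0 ?x_min_le1 ?subset_leq_card //; apply/subsetP.
rewrite /wS -prodr_const; apply: ler_prod => e /sSE e_in.
by rewrite x_min_ge0 bigmin_le_cond.
Qed.

Lemma Zk_ge0 k : 0 <= Zk k.
Proof. by apply: sumr_ge0 => S _; apply: wS_ge0. Qed.

Lemma Zk_le_card k : Zk k <= #|Omega nb k|%:R.
Proof. by rewrite /Zk -sumr_const; apply: ler_sum => S _; apply: wS_le1. Qed.

Lemma Zk0_ge1 : 1 <= Zk 0.
Proof.
have empty_in : set0 \in Omega nb 0.
  by rewrite inE sub0set -[n_odd _ _]/#|odd_vertices _ _| odd_vertices0 cards0.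
rewrite /Zk (bigD1 set0) //= {1}/wS big_set0 lerDl.
by apply: sumr_ge0 => S _; apply: wS_ge0.
Qed.

Hypothesis m_gt0 : (0 < m_circ nb)%N.
Hypothesis card_Omega_le : (m_circ nb * #|Omega nb 0| + 2 * #|Omega nb 2|
  <= minn (m_circ nb) 2 * 2 ^ #|EC nb|.+1)%N.

Lemma Z_worm_gt0 : 0 < Z_worm nb beta ref.
Proof.
have Z0_ge1 := Zk0_ge1; have Z2_ge0 := Zk_ge0 2.
have m_ge1 : 1 <= (m_circ nb)%:R :> R by rewrite ler1n.
rewrite /Z_worm; apply: (@lt_le_trans _ _ (m_circ nb)%:R); first lra.
by rewrite -[X in X <= _]addr0 lerD ?mulr_ge0 // ler_peMr // ler0n.
Qed.

Lemma xi_ge_minn S : S \in Omega_worm nb -> (minn (m_circ nb) 2)%:R <= xi R nb S :> R.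
Proof.
rewrite /xi inE; case: ifP => [_ _ | _ /= ->]; rewrite ler_nat ?geq_minl //.
exact: geq_minr.
Qed.

Lemma Z_worm_le S : S \in Omega_worm nb ->
  Z_worm nb beta ref <= xi R nb S * 2 ^+ #|EC nb|.+1.
Proof.
move=> S_in.
have Z_le : Z_worm nb beta ref <= (m_circ nb * #|Omega nb 0| + 2 * #|Omega nb 2|)%N%:R.
  by rewrite natrD !natrM lerD // ler_wpM2l ?ler0n ?Zk_le_card.
apply: (le_trans Z_le).
apply: (@le_trans _ _ (minn (m_circ nb) 2 * 2 ^ #|EC nb|.+1)%N%:R); first by rewrite ler_nat.
by rewrite natrM natrX ler_wpM2r ?exprn_ge0 ?xi_ge_minn.
Qed.

Lemma pi_worm_ge S : S \in Omega_worm nb ->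
  1 / 2 * (x_min / 2) ^+ #|EC nb| <= pi_worm nb beta ref S.
Proof.
move=> S_in; have Z_gt0 := Z_worm_gt0.
have xi_gt0 : 0 < xi R nb S.
  by apply: lt_le_trans (xi_ge_minn S_in); rewrite ltr0n leq_min m_gt0.
have w_ge : x_min ^+ #|EC nb| <= wS S.
  by apply: x_min_expn_le_wS; move: S_in; rewrite !inE => /orP[] /andP[].
have L_ge0 : 0 <= 1 / 2 * (x_min / 2) ^+ #|EC nb|.
  by rewrite mulr_ge0 ?exprn_ge0 ?divr_ge0 ?x_min_ge0.
have L_scale : 1 / 2 * (x_min / 2) ^+ #|EC nb| * 2 ^+ #|EC nb|.+1 = x_min ^+ #|EC nb|.
  rewrite expr_div_n exprS mulrACA div1r mulVf ?pnatr_eq0 // mul1r.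
  by rewrite divfK // expf_neq0 // pnatr_eq0.
rewrite /pi_worm /w_worm ler_pdivlMr //.
apply: le_trans (ler_wpM2l L_ge0 (Z_worm_le S_in)) _.
by rewrite mulrCA L_scale ler_wpM2l // ltW.
Qed.

End WormWeights.

Unset Implicit Arguments.

Theorem lemma5 (R : realFieldType) (V : finType) (nb : V -> 'I_4 -> V) (beta : R)
  (Hbeta : 1 < beta)
  (Hne : (0 < #|V|)%N)
  (Hinj : forall v, injective (nb v))
  (Hloop : forall v i, nb v i != v)
  (Hsym : forall v i, exists j, nb (nb v i) j = v)
  (Hconn : forall u v, connect (fun a b => [exists i, nb a i == b]) u v)
  (ref : {set V * 'I_4} -> V * 'I_4)
  (Href : forall C, C \in circuits nb -> ref C \in C)
  (X : {set V * 'I_4} -> bool)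
  (HX : forall v, crossing nb v ->
        X (circ nb (v, slot0)) (+) X (circ nb (v, slot1))
        = (Acount nb beta ref (cpair nb v) < Dcount nb beta ref (cpair nb v))%N)
  (ref' : {set V * 'I_4} -> V * 'I_4)
  (Href' : forall C, C \in circuits nb ->
           if X C then link nb (ref C) (ref' C) else ref' C == ref C)
  (S : {set {set {set V * 'I_4}}})
  (HS : S \in Omega_worm nb) :
  1 / 2 * (x_min nb beta ref' / 2) ^+ #|EC nb| <= pi_worm nb beta ref' S.
Proof.
have x_e01 e := x_e_bounds Href' HX e Hbeta.
have [v0 _] := card_gt0P Hne.
have u0_in := circ_in nb (v0, slot0).
have m_gt0 : (0 < m_circ nb)%N by apply/card_gt0P; exists (circ nb (v0, slot0)).
have card_Omega_le := card_edge_subsets_odd_le (@EC_edgeP _ nb) u0_in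
  (circuits_connected Hinj Hsym Hconn v0).
exact: pi_worm_ge x_e01 m_gt0 card_Omega_le S HS.
Qed.
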